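(* Let $G$ be a finite group and $n\ge1$. Every linear character of $HG_n$ is of the form $\Theta_{\xi,\pi}$ for some $\xi\in\mathcal{L}(G)$ and $\pi\in\mathcal{L}(H_n)$, i.e. $\mathcal{L}(HG_n)=\{\Theta_{\xi,\pi}\mid\xi\in\mathcal{L}(G),\ \pi\in\mathcal{L}(H_n)\}$.
   Context: $\mathcal{L}(X)$ denotes the set of linear characters of a group $X$. $SG_{2n}=G\wr S_{2n}=\{(g_1,\dots,g_{2n};\sigma)\}$ with multiplication $(g;\sigma)(h;\tau)=(g_1h_{\sigma^{-1}(1)},\dots,g_{2n}h_{\sigma^{-1}(2n)};\sigma\tau)$. $H_n\subset S_{2n}$ is the hyperoctahedral group (centralizer of $(12)(34)\cdots(2n-1\,2n)$), whose linear characters are $1,\delta,\iota,\delta\otimes\iota$ with $\delta$ the restriction of the sign of $S_{2n}$ and $\iota(\sigma)$ the sign of the permutation of the blocks $\{1,2\},\dots,\{2n-1,2n\}$ induced by $\sigma$. $HG_n=\{(g_1,g_1,\dots,g_n,g_n;\sigma)\mid g_i\in G,\sigma\in H_n\}$ and $\Theta_{\xi,\pi}(g_1,g_1,\dots,g_n,g_n;\sigma)=\xi(g_1g_2\cdots g_n)\pi(\sigma)$. *)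

From HB Require Import structures.
From mathcomp Require Import all_boot all_order all_algebra all_fingroup all_solvable all_field all_character.
Set Implicit Arguments.
Unset Strict Implicit.
Unset Printing Implicit Defensive.
Import GRing.Theory Num.Theory.
Local Open Scope group_scope.

Section Wreath.
Variables (gT : finGroupType) (m : nat).

Record wr_type := WR { wr_f : {ffun 'I_m -> gT}; wr_p : {perm 'I_m} }.
Definition wr_to_pair (x : wr_type) := (wr_f x, wr_p x).
Definition wr_of_pair (p : {ffun 'I_m -> gT} * {perm 'I_m}) := WR p.1 p.2.
Lemma wr_pairK : cancel wr_to_pair wr_of_pair. Proof. by case. Qed.
HB.instance Definition _ := Finite.copy wr_type (can_type wr_pairK).

(* Paper's multiplication:
   (g;s)(h;t) = (g_1 h_{s^-1(1)}, ..., g_m h_{s^-1(m)}; s o t).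
   In MathComp, (t * s) is the composite "s o t" (apply t first). *)
Definition wr_mul (x y : wr_type) : wr_type :=
  WR [ffun i => wr_f x i * wr_f y ((wr_p x)^-1 i)] (wr_p y * wr_p x)%g.
Definition wr_one : wr_type := WR [ffun => 1] 1.
Definition wr_inv (x : wr_type) : wr_type :=
  WR [ffun i => (wr_f x (wr_p x i))^-1] (wr_p x)^-1.

Lemma wr_mulA : associative wr_mul.
Proof.
move=> [g s] [h t] [k r]; rewrite /wr_mul /=; congr WR; last by rewrite mulgA.
by apply/ffunP=> i; rewrite !ffunE mulgA invMg permM.
Qed.

Lemma wr_mul1 : left_id wr_one wr_mul.
Proof.
move=> [g s]; rewrite /wr_mul /=; congr WR; last by rewrite mulg1.
by apply/ffunP=> i; rewrite !ffunE mul1g invg1 perm1.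
Qed.

Lemma wr_mulV : left_inverse wr_one wr_inv wr_mul.
Proof.
move=> [g s]; rewrite /wr_mul /=; congr WR; last by rewrite mulgV.
by apply/ffunP=> i; rewrite !ffunE invgK mulVg.
Qed.

HB.instance Definition _ := Finite_isGroup.Build wr_type wr_mulA wr_mul1 wr_mulV.

End Wreath.

Section Hyperoctahedral.
Variable n : nat.

Lemma blk0_subproof (i : 'I_n) : (i.*2 < n.*2)%N.
Proof. by rewrite ltn_double. Qed.
Lemma blk1_subproof (i : 'I_n) : (i.*2.+1 < n.*2)%N.
Proof. by rewrite -doubleS leq_double. Qed.

(* 0-indexed positions 2i and 2i+1 of the i-th block {2i+1, 2i+2} (1-indexed). *)
Definition blk0 (i : 'I_n) : 'I_(n.*2) := Ordinal (blk0_subproof i).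
Definition blk1 (i : 'I_n) : 'I_(n.*2) := Ordinal (blk1_subproof i).

(* The involution (1 2)(3 4)...(2n-1 2n), 0-indexed: j <-> j xor 1. *)
Definition swap_fun (j : 'I_(n.*2)) : 'I_(n.*2) :=
  insubd j (if odd j then j.-1 else j.+1).

Lemma swap_lt (j : 'I_(n.*2)) : ((if odd j then j.-1 else j.+1) < n.*2)%N.
Proof.
have jlt := ltn_ord j.
case: ifP => oj; first by rewrite (leq_ltn_trans (leq_pred _)).
case: (ltngtP j.+1 n.*2) => // Hj; first by move: Hj; rewrite ltnS leqNgt jlt.
by have := congr1 odd Hj; rewrite odd_double /= oj.
Qed.

Lemma swap_val (j : 'I_(n.*2)) :
  val (swap_fun j) = if odd j then j.-1 else j.+1.
Proof. by rewrite /swap_fun insubdK //; apply: swap_lt. Qed.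

Lemma swap_funK : involutive swap_fun.
Proof.
move=> j; apply: val_inj; rewrite !swap_val.
case: j => [[|k] kl] //=.
by case ok: (odd k) => /=; rewrite ?ok.
Qed.

Definition swap_perm : {perm 'I_(n.*2)} := perm (can_inj swap_funK).

Definition Hn : {group {perm 'I_(n.*2)}} := 'C[swap_perm]%G.

End Hyperoctahedral.

Section HG.
Variables (gT : finGroupType) (n : nat).

Definition HG_set : {set wr_type gT n.*2} :=
  [set x | (wr_p x \in Hn n) && [forall i : 'I_n, wr_f x (blk0 i) == wr_f x (blk1 i)]].

Lemma swap_perm_blk (i : 'I_n) : swap_perm n (blk0 i) = blk1 i.
Proof.
by apply: val_inj; rewrite /swap_perm permE swap_val /= odd_double.
Qed.

Lemma HG_blockP (g : {ffun 'I_(n.*2) -> gT}) :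
  [forall i : 'I_n, g (blk0 i) == g (blk1 i)] ->
  forall j, g (swap_perm n j) = g j.
Proof.
move=> /forallP H j.
have [i Hi] : exists i : 'I_n, j = blk0 i \/ j = blk1 i.
  have jlt : (j./2 < n)%N by rewrite -(ltn_double) (leq_ltn_trans _ (ltn_ord j)) // -{2}(odd_double_half j) leq_addl.
  exists (Ordinal jlt); case oj: (odd j); [right|left]; apply: val_inj => /=;
  by rewrite -[LHS](odd_double_half j) oj.
case: Hi => ->; rewrite ?swap_perm_blk ?(eqP (H i)) //.
rewrite -swap_perm_blk -permM.
have -> : (swap_perm n * swap_perm n)%g = 1%g.
  by apply/permP=> k; rewrite permM perm1 !permE swap_funK.
by rewrite perm1 swap_perm_blk (eqP (H i)).
Qed.

Lemma HG_setE x : (x \in HG_set) =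
  (wr_p x \in Hn n) && [forall i : 'I_n, wr_f x (blk0 i) == wr_f x (blk1 i)].
Proof. by rewrite /HG_set in_set. Qed.

Lemma HG_group_set : group_set HG_set.
Proof.
apply/group_setP; split.
  rewrite HG_setE /= group1; apply/forallP=> i; by rewrite !ffunE.
move=> [g s] [h t]; rewrite !HG_setE /= => /andP [sH gB] /andP [tH hB].
rewrite groupM //=.
apply/forallP=> i; rewrite !ffunE (eqP (forallP gB i)) -swap_perm_blk.
apply/eqP; congr (_ * _); rewrite -permM.
have /cent1P cs : s^-1 \in 'C[swap_perm n] by rewrite groupV.
by rewrite -cs permM (HG_blockP hB).
Qed.

Canonical HG := group HG_group_set.

Definition Theta (xi : 'CF([set: gT])) (pi : 'CF(Hn n)) (x : wr_type gT n.*2) : algC :=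
  (xi (\prod_(i < n) wr_f x (blk0 i))%g * pi (wr_p x))%R.

End HG.

From HB Require Import structures.
From mathcomp Require Import all_boot all_order all_algebra all_fingroup all_solvable all_field all_character.
Set Implicit Arguments. Unset Strict Implicit. Unset Printing Implicit Defensive.
Import GRing.Theory Num.Theory.

(* Every x in HG_n factors as a product over the blocks i of the elements
   (1,1,...,g_i,g_i,...,1,1; id) times the element (1,...,1; sigma), sigma in
   H_n.  A linear character lam is a class function, and conjugating by the
   block permutation exchanging blocks i0 and i (which lies in H_n) carries the
   i0-th copy of G onto the i-th one; so lam restricts to one linear character
   xi on every copy of G and to a linear character pi on H_n, whence
   lam = Theta_{xi,pi}.  Conversely Theta_{xi,pi} is multiplicative because
   elements of H_n permute the blocks, and a multiplicative map into algC is
   the trace of a one-dimensional representation. *)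

Lemma linear_char_of_hom (gT : finGroupType) (G : {group gT}) (f : gT -> algC) :
    f 1%g = 1%R -> {in G &, {morph f : x y / (x * y)%g >-> (x * y)%R}} ->
  exists2 lam : 'CF(G), lam \is a linear_char & {in G, lam =1 f}.
Proof.
move=> f1 fM.
have rG : mx_repr G (fun x => ((f x)%:M)%R : 'M[algC]_1).
  by split=> [|x y Gx Gy]; rewrite ?f1 //= fM // scalar_mxM.
exists (cfRepr (MxRepresentation rG)).
  by rewrite qualifE /= cfRepr_char cfRepr1 eqxx.
by move=> x Gx; rewrite cfunE Gx mulr1n mxtrace_scalar.
Qed.

Section Blocks.
Variable n : nat.
Local Notation swap := (swap_perm n).

Lemma half_ord_subproof (k : 'I_(n.*2)) : (k./2 < n)%N.
Proof. by rewrite -ltn_double (leq_ltn_trans _ (ltn_ord k)) // -{2}(odd_double_half k) leq_addl. Qed.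

Definition half_ord (k : 'I_(n.*2)) : 'I_n := Ordinal (half_ord_subproof k).

Lemma ord_half_odd_inj (a b : 'I_(n.*2)) : a./2 = b./2 -> odd a = odd b -> a = b.
Proof.
move=> eq_half eq_odd; apply: val_inj => /=.
by rewrite -(odd_double_half a) -(odd_double_half b) eq_half eq_odd.
Qed.

Lemma half_blk0 i : half_ord (blk0 i) = i.
Proof. by apply: val_inj; rewrite /= doubleK. Qed.

Lemma half_blk1 i : half_ord (blk1 i) = i.
Proof. by apply: val_inj; rewrite /= uphalf_double. Qed.

Lemma half_swap j : (swap j)./2 = j./2.
Proof.
rewrite permE swap_val; case: j => [[|k] k_lt] //=.
by rewrite uphalf_half; case: (odd k).
Qed.

Lemma odd_swap j : odd (swap j) = ~~ odd j.
Proof.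
rewrite permE swap_val; case: j => [[|k] k_lt] //=.
by case ok: (odd k) => /=; rewrite ?negbK ?ok.
Qed.

Lemma eq_half_swap (a b : 'I_(n.*2)) : a./2 = b./2 -> a = b \/ a = swap b.
Proof.
move=> eq_half; have [eq_odd|neq_odd] := eqVneq (odd a) (odd b).
  by left; apply: ord_half_odd_inj.
right; apply: ord_half_odd_inj; first by rewrite half_swap.
by rewrite odd_swap; move: neq_odd; case: (odd a); case: (odd b).
Qed.

Lemma Hn_swap q k : q \in Hn n -> q (swap k) = swap (q k).
Proof. by move/cent1P => cq; rewrite -permM -cq permM. Qed.

Lemma Hn_block_inj q : q \in Hn n -> injective (fun i => half_ord (q (blk0 i))).
Proof.
move=> qHn i j /(congr1 val) /= /eq_half_swap[/perm_inj | ].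
  by move/(congr1 val) => /= /double_inj /val_inj.
rewrite -Hn_swap // swap_perm_blk => /perm_inj/(congr1 (fun k : 'I_(n.*2) => odd k)).
by rewrite /= !odd_double.
Qed.

Lemma block_perm_subproof (rho : {perm 'I_n}) (k : 'I_(n.*2)) :
  ((rho (half_ord k)).*2 + odd k < n.*2)%N.
Proof.
have := ltn_ord (rho (half_ord k)).
by case: (odd k); rewrite ?addn1 -?doubleS ?leq_double ?addn0 ?ltn_double.
Qed.

Definition block_fun rho k : 'I_(n.*2) := Ordinal (block_perm_subproof rho k).

Lemma half_block_fun rho k : (block_fun rho k)./2 = rho (half_ord k).
Proof. by rewrite /= addnC half_bit_double. Qed.

Lemma odd_block_fun rho k : odd (block_fun rho k) = odd k.
Proof. by rewrite /= oddD odd_double oddb. Qed.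

Lemma block_fun_inj rho : injective (block_fun rho).
Proof.
move=> a b eq_ab; apply: ord_half_odd_inj; last first.
  by rewrite -(odd_block_fun rho a) eq_ab odd_block_fun.
have := half_block_fun rho a; rewrite eq_ab half_block_fun.
by move=> /val_inj/perm_inj/(congr1 val).
Qed.

Definition block_perm rho : {perm 'I_(n.*2)} := perm (@block_fun_inj rho).

Lemma block_permE rho : block_perm rho =1 block_fun rho.
Proof. exact: permE. Qed.

Lemma half_block_perm rho k : half_ord (block_perm rho k) = rho (half_ord k).
Proof. by apply: val_inj; rewrite /= block_permE half_block_fun. Qed.

Lemma block_perm_Hn rho : block_perm rho \in Hn n.
Proof.
apply/cent1P/permP => k; rewrite !permM; apply: ord_half_odd_inj.
  rewrite (half_swap (block_perm rho k)) !block_permE !half_block_fun.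
  congr (val (rho _)).
  by apply: val_inj; rewrite /= -(half_swap k) permE.
by rewrite (odd_swap (block_perm rho k)) !block_permE !odd_block_fun odd_swap.
Qed.

End Blocks.

Section WreathProduct.
Variables (gT : finGroupType) (m : nat).
Implicit Types (g h : {ffun 'I_m -> gT}) (s : {perm 'I_m}).

Lemma wr_mulE (x y : wr_type gT m) :
  (x * y = WR [ffun i => wr_f x i * wr_f y ((wr_p x)^-1 i)] (wr_p y * wr_p x))%g.
Proof. by []. Qed.

Lemma wr_invE (x : wr_type gT m) :
  (x^-1 = WR [ffun i => (wr_f x (wr_p x i))^-1] (wr_p x)^-1)%g.
Proof. by []. Qed.

Lemma wr_oneE : (1 : wr_type gT m)%g = WR [ffun => 1%g] 1%g.
Proof. by []. Qed.

Lemma mul_WR1 g h : (WR g 1 * WR h 1 = WR [ffun k => g k * h k] 1 :> wr_type gT m)%g.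
Proof.
rewrite wr_mulE; congr WR; last by rewrite mulg1.
by apply/ffunP=> k; rewrite !ffunE invg1 perm1.
Qed.

Lemma prod_WR1 (I : Type) (r : seq I) (g : I -> {ffun 'I_m -> gT}) :
  (\prod_(i <- r) WR (g i) 1 = WR [ffun k => \prod_(i <- r) g i k] 1 :> wr_type gT m)%g.
Proof.
elim: r => [|i r IHr].
  by rewrite big_nil wr_oneE; congr WR; apply/ffunP=> k; rewrite !ffunE big_nil.
rewrite big_cons IHr mul_WR1; congr WR.
by apply/ffunP=> k; rewrite !ffunE big_cons.
Qed.

Lemma WR_base_perm g s : (WR g s = WR g 1 * WR [ffun => 1] s :> wr_type gT m)%g.
Proof.
rewrite wr_mulE; congr WR; last by rewrite mulg1.
by apply/ffunP=> k; rewrite !ffunE mulg1.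
Qed.

End WreathProduct.

Section HGElements.
Variables (gT : finGroupType) (n : nat).
Local Notation W := (wr_type gT n.*2).

Definition block_elt (i : 'I_n) (h : gT) : W :=
  WR [ffun k => if half_ord k == i then h else 1%g] 1%g.

Definition perm_elt (s : {perm 'I_(n.*2)}) : W := WR [ffun => 1%g] s.

Lemma HG_block_eq (x : W) k : x \in HG gT n -> wr_f x k = wr_f x (blk0 (half_ord k)).
Proof.
rewrite HG_setE => /andP[_ blocks].
set b := blk0 (half_ord k).
have /eq_half_swap[-> // | ->] : (k : nat)./2 = (b : nat)./2 by rewrite /= doubleK.
exact: HG_blockP.
Qed.

Lemma HG_perm_Hn x : x \in HG gT n -> wr_p x \in Hn n.
Proof. by rewrite HG_setE => /andP[]. Qed.

Lemma block_elt_HG i h : block_elt i h \in HG gT n.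
Proof.
by rewrite HG_setE group1; apply/forallP=> j; rewrite !ffunE half_blk0 half_blk1.
Qed.

Lemma perm_elt_HG s : s \in Hn n -> perm_elt s \in HG gT n.
Proof. by move=> sHn; rewrite HG_setE sHn; apply/forallP=> j; rewrite !ffunE. Qed.

Lemma block_eltM i h h' : (block_elt i h * block_elt i h' = block_elt i (h * h'))%g.
Proof.
rewrite mul_WR1; congr WR; apply/ffunP=> k; rewrite !ffunE.
by case: ifP; rewrite ?mulg1.
Qed.

Lemma block_elt1 i : block_elt i 1 = 1%g.
Proof. by rewrite wr_oneE; congr WR; apply/ffunP=> k; rewrite !ffunE if_same. Qed.

Lemma perm_eltM s t : (perm_elt s * perm_elt t = perm_elt (t * s))%g.
Proof. by rewrite wr_mulE; congr WR; apply/ffunP=> k; rewrite !ffunE mulg1. Qed.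

Lemma perm_elt1 : perm_elt 1 = 1%g.
Proof. by []. Qed.

Lemma prod_block_elt (h : 'I_n -> gT) :
  (\prod_(i < n) block_elt i (h i) = WR [ffun k => h (half_ord k)] 1)%g.
Proof.
rewrite prod_WR1; congr WR; apply/ffunP=> k; rewrite !ffunE.
under eq_bigr do rewrite ffunE.
by rewrite -big_mkcond (big_pred1 (half_ord k)) // => i; rewrite /= eq_sym.
Qed.

Lemma HG_decomp x : x \in HG gT n ->
  x = (\prod_(i < n) block_elt i (wr_f x (blk0 i)) * perm_elt (wr_p x))%g.
Proof.
move=> xHG; rewrite prod_block_elt; case: x xHG => g s xHG.
rewrite [LHS]WR_base_perm; congr (WR _ _ * _)%g.
by apply/ffunP=> k; rewrite ffunE; exact: (HG_block_eq k xHG).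
Qed.

Lemma block_elt_conj i0 i h :
  (block_elt i0 h ^ perm_elt (block_perm (tperm i0 i)) = block_elt i h)%g.
Proof.
rewrite conjgE !wr_mulE wr_invE /=; congr WR; last by rewrite mulg1 mulgV.
apply/ffunP=> k; rewrite !ffunE invgK invg1 mul1g mulg1 half_block_perm.
by rewrite -[X in _ == X](tpermR i0 i) (inj_eq perm_inj).
Qed.

End HGElements.
Arguments perm_elt {gT n} s.

Section LinearCharacters.
Variables (gT : finGroupType) (n : nat).
Local Notation W := (wr_type gT n.*2).
Local Open Scope ring_scope.

Lemma Theta1 (xi : 'CF([set: gT])) (pi : 'CF(Hn n)) :
  xi \is a linear_char -> pi \is a linear_char -> Theta xi pi (1%g : W) = 1.
Proof.
move=> xi_lin pi_lin; rewrite /Theta wr_oneE /= (lin_char1 pi_lin) mulr1.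
by rewrite big1 ?lin_char1 // => i _; rewrite ffunE.
Qed.

(* [wr_p x] permutes the blocks, so the [xi]-factor coming from [y] is only
   reindexed. *)
Lemma ThetaM (xi : 'CF([set: gT])) (pi : 'CF(Hn n)) :
    xi \is a linear_char -> pi \is a linear_char ->
  {in HG gT n &, {morph Theta xi pi : x y / (x * y)%g >-> x * y}}.
Proof.
move=> xi_lin pi_lin x y xHG yHG.
have xi_prod (a : 'I_n -> gT) : xi (\prod_i a i)%g = \prod_i xi (a i).
  by apply: lin_char_prod => // i _; rewrite inE.
rewrite /Theta !xi_prod wr_mulE /= (lin_charM pi_lin) ?HG_perm_Hn //.
under eq_bigr do rewrite ffunE (lin_charM xi_lin) ?inE //.
rewrite big_split /= [pi _ * pi _]mulrC mulrACA; congr (_ * (_ * _)).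
have pxVHn : ((wr_p x)^-1)%g \in Hn n by rewrite groupV HG_perm_Hn.
rewrite [RHS](reindex_inj (Hn_block_inj pxVHn)) /=.
by apply: eq_bigr => i _; rewrite (HG_block_eq _ yHG).
Qed.

Lemma Theta_linear_char (xi : 'CF([set: gT])) (pi : 'CF(Hn n)) :
    xi \is a linear_char -> pi \is a linear_char ->
  exists2 lam : 'CF(HG gT n), lam \is a linear_char & {in HG gT n, lam =1 Theta xi pi}.
Proof. by move=> xi_lin pi_lin; apply: linear_char_of_hom; [apply: Theta1 | apply: ThetaM]. Qed.

(* Conjugation by block permutations identifies all block embeddings of G. *)
Lemma cfun_block_elt (phi : 'CF(HG gT n)) i0 i h :
  phi (block_elt i h) = phi (block_elt i0 h).
Proof.
rewrite -(block_elt_conj i0 i h) cfunJ //.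
by apply: perm_elt_HG; apply: block_perm_Hn.
Qed.

Lemma linear_char_HGE (lam : 'CF(HG gT n)) x :
    lam \is a linear_char -> x \in HG gT n ->
  lam x = (\prod_(i < n) lam (block_elt i (wr_f x (blk0 i)))) * lam (perm_elt (wr_p x)).
Proof.
move=> lam_lin xHG; rewrite {1}(HG_decomp xHG).
rewrite (lin_charM lam_lin) ?perm_elt_HG ?HG_perm_Hn //.
  by rewrite (lin_char_prod lam_lin) // => i _; apply: block_elt_HG.
by apply: group_prod => i _; apply: block_elt_HG.
Qed.

End LinearCharacters.

Theorem proposition4p2 (gT : finGroupType) (n : nat) (hn : (1 <= n)%N) :
  (forall lam : 'CF(HG gT n), lam \is a linear_char ->
     exists (xi : 'CF([set: gT])) (pi : 'CF(Hn n)),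
       [/\ xi \is a linear_char, pi \is a linear_char &
           {in HG gT n, forall x, lam x = Theta xi pi x}]) /\
  (forall (xi : 'CF([set: gT])) (pi : 'CF(Hn n)),
     xi \is a linear_char -> pi \is a linear_char ->
     exists lam : 'CF(HG gT n),
       lam \is a linear_char /\ {in HG gT n, forall x, lam x = Theta xi pi x}).
Proof.
split=> [lam lam_lin | xi pi xi_lin pi_lin]; last first.
  by have [lam] := Theta_linear_char xi_lin pi_lin; exists lam.
pose i0 : 'I_n := Ordinal hn.
have [xi xi_lin xiE] : exists2 xi : 'CF([set: gT]),
    xi \is a linear_char & {in [set: gT], xi =1 fun h => lam (block_elt i0 h)}.
  apply: linear_char_of_hom => [|a b _ _]; first by rewrite block_elt1 lin_char1.
  by rewrite -block_eltM (lin_charM lam_lin) ?block_elt_HG.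
have [pi pi_lin piE] : exists2 pi : 'CF(Hn n),
    pi \is a linear_char & {in Hn n, pi =1 fun s => lam (perm_elt s)}.
  apply: linear_char_of_hom => [|s t sHn tHn]; first by rewrite perm_elt1 lin_char1.
  by rewrite /= -perm_eltM (lin_charM lam_lin) ?perm_elt_HG // mulrC.
exists xi, pi; split=> // x xHG.
rewrite (linear_char_HGE lam_lin xHG) /Theta piE ?HG_perm_Hn //.
rewrite (lin_char_prod xi_lin) => [|i _]; last by rewrite inE.
congr (_ * _)%R; apply: eq_bigr => i _.
by rewrite xiE ?inE // (cfun_block_elt lam i0).
Qed.
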